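(* Let $f,g\in\mathbb L^2([0,1])$ with $\Delta=\|f-g\|>0$, let $X$ be distributed according to the model below, and set $\delta=\dfrac{e^{-(1+\Delta/2)^2/2}}{2\sqrt{2\pi}}$. Then for all $\epsilon\le\frac14\wedge\Delta$, \[ \mathbb P\Big(\delta\epsilon\le\big|\eta(X)-\tfrac12\big|\le\epsilon\Big)\ge\delta\frac\epsilon\Delta. \]
   Context: Model: $Y\sim\mathrm{Bernoulli}(1/2)$ independent of a standard Brownian motion $W$ on $[0,1]$, and $dX(t)=Yf(t)\,dt+(1-Y)g(t)\,dt+dW(t)$. Regression function $\eta(X)=\mathbb P(Y=1\mid X)=\dfrac{\exp(\int_0^1(f-g)\,dX-\frac12\|f\|^2+\frac12\|g\|^2)}{1+\exp(\int_0^1(f-g)\,dX-\frac12\|f\|^2+\frac12\|g\|^2)}$. $\|\cdot\|$ is the $\mathbb L^2([0,1])$ norm; $a\wedge b=\min\{a,b\}$. *)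

From HB Require Import structures.
From mathcomp Require Import all_boot all_order all_algebra.
From mathcomp Require Import all_classical all_reals all_analysis.
Set Implicit Arguments. Unset Strict Implicit. Unset Printing Implicit Defensive.
Import Order.TTheory GRing.Theory Num.Theory.
Local Open Scope classical_set_scope.
Local Open Scope ring_scope.

Definition I01 {R : realType} : set R := `[0%R, 1%R].

Definition L2_01 {R : realType} (f : R -> R) : Prop :=
  measurable_fun I01 f /\
  (@lebesgue_measure R).-integrable I01 (fun x => (f x ^+ 2)%:E).

Definition inner01 {R : realType} (f g : R -> R) : R :=
  Rintegral (@lebesgue_measure R) I01 (fun x => f x * g x).

Definition norm01 {R : realType} (f : R -> R) : R := Num.sqrt (inner01 f f).

Definition indep_bool_real {d} {T : measurableType d} {R : realType}
    (P : probability T R) (Y : T -> bool) (Z : T -> R) : Prop :=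
  forall (A : set bool) (B : set R), measurable A -> measurable B ->
    P (Y @^-1` A `&` Z @^-1` B) = (P (Y @^-1` A) * P (Z @^-1` B))%E.

(* Observation functional of the model dX = Y f dt + (1-Y) g dt + dW:
   int_0^1 h dX = Y <h,f> + (1-Y) <h,g> + int_0^1 h dW ; here xi(w) stands
   for the Wiener integral int_0^1 (f-g) dW evaluated at w. *)
Definition int_fg_dX {R : realType} {T : Type} (f g : R -> R)
    (Y : T -> bool) (xi : T -> R) (w : T) : R :=
  (if Y w then inner01 (f \- g) f else inner01 (f \- g) g) + xi w.

(* regression function eta(X) = P(Y = 1 | X) *)
Definition eta_X {R : realType} {T : Type} (f g : R -> R)
    (Y : T -> bool) (xi : T -> R) (w : T) : R :=
  let z := int_fg_dX f g Y xi w - (norm01 f) ^+ 2 / 2 + (norm01 g) ^+ 2 / 2 in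
  expR z / (1 + expR z).

(* On the event {Y = 1} the log-likelihood ratio
   Z = int (f - g) dX - |f|^2/2 + |g|^2/2 equals Delta^2/2 + xi with
   xi ~ N(0, Delta^2), and eta(X) = logistic Z.  Since logistic z - 1/2 behaves
   like z/4 near 0, the event {Y = 1, eps/2 <= |Z| <= eps} forces
   delta eps <= |eta(X) - 1/2| <= eps as soon as delta <= 31/250.  Its
   probability is 1/2 times the Gaussian mass of a set of Lebesgue measure eps
   contained in [-Delta - Delta^2/2, Delta + Delta^2/2], on which the
   N(0, Delta^2) density is at least 2 delta / Delta. *)

From HB Require Import structures.
From mathcomp Require Import all_boot all_order all_algebra.
From mathcomp Require Import all_classical all_reals all_analysis.
From mathcomp Require Import ring lra measurable_realfun.
Set Implicit Arguments.
Unset Strict Implicit.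
Unset Printing Implicit Defensive.
Import Order.TTheory GRing.Theory Num.Theory.
Import numFieldNormedType.Exports.
Local Open Scope classical_set_scope.
Local Open Scope ring_scope.

Section numerics.
Context {R : realType}.

Lemma expR_ge1Dx_sqr (x : R) : 0 <= x -> 1 + x + x ^+ 2 / 2 <= expR x.
Proof.
move=> x0; rewrite /expR.
have -> : 1 + x + x ^+ 2 / 2 = series (exp_coeff x) 3.
  by rewrite /series /= !big_nat_recr //= big_nil /exp_coeff /= !factS fact0; field.
apply: nondecreasing_cvgn_le; last exact: is_cvg_series_exp_coeff.
by apply: nondecreasing_series => n _ _; exact: exp_coeff_ge0.
Qed.

Lemma cos_31_20_gt0 : 0 < cos (31 / 20 : R).
Proof.
set x : R := 31 / 20.
have h := @cvg_cos_coeff' R x; rewrite -(cvg_lim (@Rhausdorff R) h).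
apply: (@lt_trans _ _ (\sum_(0 <= i < 4) cos_coeff' x i)).
  rewrite !big_nat_recr //= big_nil add0r /cos_coeff' /x -!exprnP /= !factS fact0 /=.
  rewrite !(exprS, expr0, mulr1, mulN1r, mulNr, mul1r, opprK) !natrM; lra.
(* From the fourth term on, consecutive terms pair into positive sums because
   [x^2 < (m + 1) (m + 2)]. *)
apply: lt_sum_lim_series; first by move/cvgP in h.
move=> k; rewrite /cos_coeff' addnS.
set n := (4 + k.*2)%N.
have n_even : ~~ odd n by rewrite /n oddD odd_double.
have -> : (-1) ^ n = 1 :> R by rewrite -exprnP -signr_odd (negbTE n_even).
have -> : (-1) ^ n.+1 = -1 :> R by rewrite -exprnP -signr_odd /= n_even.
rewrite doubleS mul1r mulN1r !mulNr.
have m8 : (8 <= n.*2)%N by rewrite /n doubleD.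
move: (n.*2) m8 => m m8.
have fact_m_gt0 : 0 < (m`!)%:R :> R by rewrite ltr0n fact_gt0.
have x_gt0 : 0 < x by rewrite /x; lra.
have m8r : 8 <= m%:R :> R by rewrite (ler_nat R 8 m).
rewrite !factS !natrM !exprS.
have -> : x * (x * x ^+ m) / ((m.+2)%:R * ((m.+1)%:R * (m`!)%:R)) =
    x ^+ m / (m`!)%:R * (x * x / ((m.+2)%:R * (m.+1)%:R)).
  by field; apply/and3P; split; rewrite gt_eqF //; lra.
rewrite -{1}(mulr1 (x ^+ m / _)) -mulrBr mulr_gt0 ?divr_gt0 ?exprn_gt0 // subr_gt0.
rewrite ltr_pdivrMr ?mul1r ?mulr_gt0 ?ltr0n // -natrM.
apply: (@lt_le_trans _ _ 90%:R); first by rewrite /x; lra.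
by rewrite ler_nat (@leq_mul 10 9).
Qed.

Lemma pi_gt_31_10 : 31 / 10 < (pi : R).
Proof.
rewrite ltNge; apply/negP => pi_le.
have pi2 := @pi_ge2 R.
have : cos (31 / 20 : R) <= cos (pi / 2).
  rewrite leNgt ltr_cos ?in_itv /= -?leNgt; try (apply/andP; split); lra.
by rewrite cos_pihalf leNgt cos_31_20_gt0.
Qed.

(* [e^(1/2) >= 13/8] and [sqrt (2 pi) >= 1000/403] (from [pi > 31/10]) give exactly
   [31/250]; the weaker [pi >= 2] of the library would not suffice. *)
Lemma std_normal_pdf_half_le (u : R) : 1 <= u ->
  expR (- u ^+ 2 / 2) / (2 * Num.sqrt (2 * pi)) <= 31 / 250.
Proof.
move=> u_ge1.
have e_half : 13 / 8 <= expR (1 / 2 : R) by have := @expR_ge1Dx_sqr (1 / 2) ltac:(lra); lra.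
have sqrt_2pi : 1000 / 403 <= Num.sqrt (2 * pi : R).
  rewrite -(ger0_norm (_ : 0 <= 1000 / 403 :> R)); last lra.
  rewrite -sqrtr_sqr ler_sqrt; have := pi_gt_31_10; lra.
have e_le : expR (- u ^+ 2 / 2) <= (expR (1 / 2))^-1 by rewrite -expRN ler_expR; nra.
have := expRxMexpNx_1 (1 / 2 : R); rewrite expRN => e_inv.
have := expR_gt0 (1 / 2 : R); rewrite -invr_gt0 => inv_gt0.
rewrite ler_pdivrMr; nra.
Qed.

End numerics.

Section logistic.
Context {R : realType}.
Implicit Types x y : R.

Definition logistic (x : R) : R := expR x / (1 + expR x).

Lemma logisticE x : logistic x = 1 - (1 + expR x)^-1.
Proof. by rewrite /logistic; have v0 := expR_gt0 x; field; lra. Qed.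

Lemma logisticN x : logistic (- x) = 1 - logistic x.
Proof. by rewrite /logistic expRN; have v0 := expR_gt0 x; field; lra. Qed.

Lemma ler_logistic : {homo logistic : x y / x <= y}.
Proof.
move=> x y xy; rewrite !logisticE lerD2l lerN2 lef_pV2 ?posrE ?addr_gt0 ?expR_gt0 //.
by rewrite lerD2l ler_expR.
Qed.

Lemma logistic_sub_half x : logistic x - 1 / 2 = (expR x - 1) / (2 * (1 + expR x)).
Proof. by rewrite /logistic; have v0 := expR_gt0 x; field; lra. Qed.

Lemma logistic_sub_half_le x : 0 <= x -> logistic x - 1 / 2 <= x.
Proof.
move=> x0; have v0 := expR_gt0 x.
have : expR x * (1 - x) <= 1.
  by rewrite -[leRHS](expRxMexpNx_1 x) ler_wpM2l ?expR_ge0 //; have := expR_ge1Dx (- x); lra.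
rewrite logistic_sub_half ler_pdivrMr; nra.
Qed.

Lemma logistic_sub_half_ge x : 0 <= x <= 1 / 8 -> 31 / 125 * x <= logistic x - 1 / 2.
Proof.
move=> /andP[x0 x_le]; have v0 := expR_gt0 x; have := expR_ge1Dx_sqr x0.
rewrite logistic_sub_half ler_pdivlMr; nra.
Qed.

Lemma logistic_dev_bounds eps z : 0 < eps <= 1 / 4 -> eps / 2 <= `|z| <= eps ->
  31 / 250 * eps <= `|logistic z - 1 / 2| <= eps.
Proof.
wlog z0 : z / 0 <= z.
  move=> wlog_z eps_bd z_bd; have [/wlog_z|z_lt0] := leP 0 z; first exact.
  have -> : `|logistic z - 1 / 2| = `|logistic (- z) - 1 / 2|.
    by rewrite logisticN -normrN; congr `|_|; field.
  by apply: wlog_z; rewrite ?normrN //; lra.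
move=> /andP[eps0 eps_le]; rewrite ger0_norm // => /andP[z_ge z_le].
have dev0 : 0 <= logistic z - 1 / 2.
  have -> : 1 / 2 = logistic 0 by rewrite /logistic expR0; field.
  by rewrite subr_ge0 ler_logistic.
rewrite ger0_norm //; apply/andP; split.
  apply: le_trans (_ : logistic (eps / 2) - 1 / 2 <= _).
    have := @logistic_sub_half_ge (eps / 2) ltac:(lra); lra.
  by rewrite lerD2r ler_logistic.
exact: le_trans (logistic_sub_half_le z0) z_le.
Qed.

End logistic.

Lemma continuous_logistic {R : realType} : continuous (@logistic R).
Proof.
move=> x; apply: cvgM; first exact: continuous_expR.
apply: cvgV; first by rewrite gt_eqF // addr_gt0 // expR_gt0.
by apply: cvgD; [exact: cvg_cst|exact: continuous_expR].
Qed.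

Section L2_01.
Context {R : realType}.
Implicit Types f g h : R -> R.
Local Notation mu := (@lebesgue_measure R).

Lemma measurable_I01 : measurable (I01 : set (measurableTypeR R)).
Proof. exact: measurable_itv. Qed.

Lemma integrable_mul_L2_01 f g : L2_01 f -> L2_01 g ->
  mu.-integrable I01 (EFin \o (f \* g)).
Proof.
move=> [mf If] [mg Ig].
apply: (le_integrable measurable_I01 _ _ (integrableD measurable_I01 If Ig)).
  by apply/measurable_EFinP; exact: measurable_funM.
move=> x _ /=; rewrite lee_fin [leRHS]ger0_norm ?addr_ge0 ?sqr_ge0 //.
by rewrite ler_norml; apply/andP; split; nra.
Qed.

Lemma L2_01B f g : L2_01 f -> L2_01 g -> L2_01 (f \- g).
Proof.
move=> Lf Lg; split; first exact: measurable_funB Lf.1 Lg.1.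
have If2 := integrableD measurable_I01 Lf.2 Lf.2.
have Ig2 := integrableD measurable_I01 Lg.2 Lg.2.
apply: (le_integrable measurable_I01 _ _ (integrableD measurable_I01 If2 Ig2)).
  by apply/measurable_EFinP; apply: measurable_funX; exact: measurable_funB Lf.1 Lg.1.
move=> x _ /=; rewrite lee_fin !ger0_norm ?sqr_ge0 ?addr_ge0 ?sqr_ge0 //.
have -> : f x ^+ 2 + f x ^+ 2 + (g x ^+ 2 + g x ^+ 2) =
  (f x - g x) ^+ 2 + (f x + g x) ^+ 2 by ring.
by rewrite lerDl sqr_ge0.
Qed.

Lemma inner01C f g : inner01 f g = inner01 g f.
Proof. by apply: eq_Rintegral => x _; rewrite mulrC. Qed.

Lemma inner01Bl f g h : L2_01 f -> L2_01 g -> L2_01 h ->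
  inner01 (f \- g) h = inner01 f h - inner01 g h.
Proof.
move=> Lf Lg Lh; rewrite /inner01 -(RintegralB measurable_I01
  (integrable_mul_L2_01 Lf Lh) (integrable_mul_L2_01 Lg Lh)).
by apply: eq_Rintegral => x _; rewrite mulrBl.
Qed.

Lemma norm01_sqr f : norm01 f ^+ 2 = inner01 f f.
Proof.
by rewrite /norm01 sqr_sqrtr // Rintegral_ge0 // => x _; rewrite -expr2 sqr_ge0.
Qed.

Lemma polarization01 f g : L2_01 f -> L2_01 g ->
  inner01 (f \- g) f - norm01 f ^+ 2 / 2 + norm01 g ^+ 2 / 2 = norm01 (f \- g) ^+ 2 / 2.
Proof.
move=> Lf Lg; have Lfg := L2_01B Lf Lg.
rewrite !norm01_sqr !inner01Bl // (inner01C f (f \- g)) (inner01C g (f \- g)).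
by rewrite !inner01Bl // (inner01C g f); field.
Qed.

End L2_01.

Section annulus.
Context {R : realType}.

Lemma annulusE (c a r : R) : 0 <= a ->
  [set x | a <= `|x + c| <= r] = `[a - c, r - c] `|` `[- r - c, - a - c].
Proof.
move=> a0; apply/seteqP; split => x /=.
  have [xc0|xc0] := leP 0 (x + c).
    by rewrite ger0_norm // => xa; left; rewrite /= in_itv /=; lra.
  by rewrite ltr0_norm // => xa; right; rewrite /= in_itv /=; lra.
by case; rewrite /= in_itv /= => xa; [rewrite ger0_norm|rewrite ler0_norm]; lra.
Qed.

Lemma measurable_annulus (c a r : R) : 0 <= a -> measurable [set x | a <= `|x + c| <= r].
Proof. by move=> a0; rewrite annulusE //; exact: measurableU. Qed.

Lemma lebesgue_measure_annulus (c a r : R) : 0 < a < r ->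
  lebesgue_measure [set x | a <= `|x + c| <= r] = ((r - a) *+ 2)%:E.
Proof.
move=> /andP[a0 ar]; rewrite annulusE ?ltW // measureU //=; first last.
- apply/seteqP; split => // x [] /=; rewrite !in_itv /= => /andP[h1 h2] /andP[h3 h4]; lra.
rewrite !lebesgue_measure_itv /= !lte_fin ifT; last lra.
rewrite ifT; last lra.
by rewrite -!EFinD; congr EFin; rewrite mulr2n; ring.
Qed.

End annulus.

Section gaussian_lower_bound.
Context {R : realType}.
Local Notation mu := (@lebesgue_measure R).

Lemma normal_pdf0_le (s x r : R) : s != 0 -> `|x| <= r ->
  normal_pdf 0 s r <= normal_pdf 0 s x.
Proof.
move=> s0; rewrite ler_norml => /andP[rx xr].
rewrite !normal_pdfE //= ler_wpM2l ?normal_peak_ge0 // ler_expR !subr0 !mulNr lerN2.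
by rewrite ler_wpM2r ?invr_ge0 ?mulrn_wge0 ?sqr_ge0 //; nra.
Qed.

Lemma normal_prob_ge_pdf (s r : R) (A : set R) : s != 0 -> measurable A ->
  A `<=` [set x | `|x| <= r] ->
  ((normal_pdf 0 s r)%:E * mu A <= normal_prob 0 s A)%E.
Proof.
move=> s0 mA Ar; rewrite -integral_cst //.
apply: ge0_le_integral => //.
- by move=> x _; rewrite lee_fin normal_pdf_ge0.
- apply/measurable_EFinP; apply: measurable_funS (measurable_normal_pdf 0 s) => //.
- by move=> x /Ar; rewrite lee_fin; exact: normal_pdf0_le.
Qed.

Lemma normal_pdf0_scale (s a : R) : 0 < s ->
  normal_pdf 0 s (s * a) = expR (- a ^+ 2 / 2) / (s * Num.sqrt (2 * pi)).
Proof.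
move=> s0; rewrite normal_pdfE ?gt_eqF //= /normal_peak /normal_fun subr0.
have -> : s ^+ 2 * pi *+ 2 = s ^+ 2 * (2 * pi) by rewrite mulr2n; ring.
rewrite sqrtrM ?sqr_ge0 // sqrtr_sqr gtr0_norm // mulrC; congr (expR _ / _).
by field; rewrite gt_eqF.
Qed.

Lemma normal_prob_annulus_ge (s eps : R) : 0 < s -> 0 < eps <= s ->
  ((expR (- (1 + s / 2) ^+ 2 / 2) / (s * Num.sqrt (2 * pi)) * eps)%:E <=
   normal_prob 0 s [set x | (eps / 2 <= `|x + s ^+ 2 / 2| <= eps)%R])%E.
Proof.
move=> s_gt0 /andP[eps_gt0 eps_le].
have A_sub : [set x | eps / 2 <= `|x + s ^+ 2 / 2| <= eps] `<=`
    [set x | `|x| <= s * (1 + s / 2)].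
  move=> x; rewrite /= !ler_norml (_ : s * _ = s + s ^+ 2 / 2); last by field.
  have : 0 <= s ^+ 2 / 2 by rewrite divr_ge0 ?sqr_ge0.
  lra.
have mA := @measurable_annulus _ (s ^+ 2 / 2) (eps / 2) eps ltac:(lra).
apply: (le_trans _ (normal_prob_ge_pdf (lt0r_neq0 s_gt0) mA A_sub)).
rewrite normal_pdf0_scale // lebesgue_measure_annulus; last lra.
by rewrite (_ : (eps - eps / 2) *+ 2 = eps) // mulr2n; field.
Qed.

End gaussian_lower_bound.

Lemma bernoulli_prob_true {R : realType} (p : R) : 0 <= p <= 1 ->
  bernoulli_prob p [set true] = p%:E.
Proof. by move=> p01; rewrite /bernoulli_prob p01 fsbig_set1. Qed.

Section model.
Context {R : realType} (f g : R -> R) {d : measure_display} {T : measurableType d}.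
Variables (Y : T -> bool) (xi : T -> R).

Lemma eta_X_true w : L2_01 f -> L2_01 g -> Y w ->
  eta_X f g Y xi w = logistic (xi w + norm01 (f \- g) ^+ 2 / 2).
Proof.
move=> Lf Lg Yw; rewrite /eta_X /int_fg_dX Yw -(polarization01 Lf Lg) /logistic.
by congr (expR _ / (1 + expR _)); ring.
Qed.

Lemma eta_X_dev_bounds w eps : L2_01 f -> L2_01 g -> 0 < eps <= 1 / 4 -> Y w ->
  eps / 2 <= `|xi w + norm01 (f \- g) ^+ 2 / 2| <= eps ->
  31 / 250 * eps <= `|eta_X f g Y xi w - 1 / 2| <= eps.
Proof. by move=> Lf Lg eps_bd Yw; rewrite eta_X_true //; exact: logistic_dev_bounds. Qed.

Lemma measurable_eta_X : measurable_fun setT Y -> measurable_fun setT xi ->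
  measurable_fun setT (eta_X f g Y xi).
Proof.
move=> mY mxi.
have -> : eta_X f g Y xi = logistic \o
    (fun w => int_fg_dX f g Y xi w - norm01 f ^+ 2 / 2 + norm01 g ^+ 2 / 2) by [].
apply: (measurableT_comp (continuous_measurable_fun (@continuous_logistic R))).
apply: measurable_funD => //; apply: measurable_funB => //.
by apply: measurable_funD => //; exact: measurable_fun_ifT.
Qed.

Lemma measurable_eta_X_band (a b : R) : measurable_fun setT Y -> measurable_fun setT xi ->
  measurable [set w | a <= `|eta_X f g Y xi w - 1 / 2| <= b].
Proof.
move=> mY mxi.
have : measurable_fun setT (Num.norm \o (fun w => eta_X f g Y xi w - 1 / 2)).
  apply: (measurableT_comp (@normr_measurable R setT)).
  exact: measurable_funB (measurable_eta_X mY mxi) (measurable_cst _).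
move=> /(_ measurableT `[a, b]%classic (measurable_itv _)); rewrite setTI.
by congr measurable; apply/seteqP; split => w; rewrite /= in_itv.
Qed.

End model.

Theorem proposition5 (R : realType) (f g : R -> R) (d : measure_display)
  (T : measurableType d) (P : probability T R) (Y : T -> bool) (xi : T -> R) :
  L2_01 f -> L2_01 g ->
  0 < norm01 (f \- g) ->
  measurable_fun setT Y ->
  (forall A : set bool, measurable A ->
     P (Y @^-1` A) = bernoulli_prob (1 / 2 : R) A) ->
  measurable_fun setT xi ->
  (forall B : set R, measurable B ->
     P (xi @^-1` B) = normal_prob 0 (norm01 (f \- g)) B) ->
  indep_bool_real P Y xi ->
  let Delta := norm01 (f \- g) in
  let delta := expR (- (1 + Delta / 2) ^+ 2 / 2) / (2 * Num.sqrt (2 * pi)) in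
  forall eps : R, eps <= Num.min (1 / 4) Delta ->
    ((delta * eps / Delta)%:E <=
     P [set w | (delta * eps <= `|eta_X f g Y xi w - 1 / 2| <= eps)%R])%E.
Proof.
move=> Lf Lg Delta_gt0 mY PY mxi Pxi indep Delta delta eps.
rewrite le_min => /andP[eps_le eps_leD].
have sqrt_gt0 : 0 < Num.sqrt (2 * pi : R) by rewrite sqrtr_gt0 mulr_gt0 ?pi_gt0.
have delta_gt0 : 0 < delta by rewrite divr_gt0 ?expR_gt0 ?mulr_gt0.
have [eps_le0|eps_gt0] := leP eps 0.
  by apply: le_trans (measure_ge0 _ _); rewrite lee_fin ler_pdivrMr // mul0r; nra.
have eps_bd : 0 < eps <= 1 / 4 by rewrite eps_gt0.
set A := [set x : R | eps / 2 <= `|x + Delta ^+ 2 / 2| <= eps].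
have mA : measurable A by apply: measurable_annulus; lra.
pose S := Y @^-1` [set true] `&` xi @^-1` A.
have mS : measurable S.
  apply: measurableI; first by rewrite -(setTI (Y @^-1` _)); exact: mY.
  by rewrite -(setTI (xi @^-1` _)); exact: mxi.
have SE : S `<=` [set w | delta * eps <= `|eta_X f g Y xi w - 1 / 2| <= eps].
  move=> w [/= Yw Aw]; have /andP[dev_ge ->] := eta_X_dev_bounds Lf Lg eps_bd Yw Aw.
  rewrite andbT (le_trans _ dev_ge) // ler_pM2r // std_normal_pdf_half_le //; lra.
apply: (@le_trans _ _ (P S)); last first.
  by apply: le_measure; rewrite ?inE //; exact: measurable_eta_X_band.
rewrite /S indep // PY // bernoulli_prob_true ?Pxi //; last lra.
apply: (le_trans _ (lee_wpmul2l _ (normal_prob_annulus_ge Delta_gt0 _))); last 2 first.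
- by rewrite lee_fin.
- by rewrite eps_gt0.
rewrite -EFinM lee_fin le_eqVlt -/Delta /delta; apply/orP; left; apply/eqP.
by field; rewrite (lt0r_neq0 sqrt_gt0) (lt0r_neq0 Delta_gt0).
Qed.
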